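(* Let $\ell,m$ be positive integers and $\mu\in\mathcal{P}^{\ell,\ell+m-1}$, and let $\mu'=\tau_{\ell+m-1}(\mu)$. Then the following are equivalent: (1) for every $i\in[\ell]$, if $\tilde\mu(i)<i$ then $\tilde\mu(\tilde\mu(i))<i$; (2) for every $i\in[\ell]$, if $\widetilde{\mu'}(i)>i$ then $\widetilde{\mu'}(\widetilde{\mu'}(i))>i$.
   Context: For a positive integer $n$, $[n]=\{1,\dots,n\}$. $\mathcal{P}^{n,k}$ is the set of partitions $(\mu_1\geq\dots\geq\mu_n>0)$ with exactly $n$ parts and $\mu_1\leq k$, regarded as weakly decreasing functions $[n]\to[k]$, $\mu(i)=\mu_i$. The map $\tau_k:\mathcal{P}^{n,k}\to\mathcal{P}^{n,k}$ is $\tau_k(\mu_1,\dots,\mu_n)=(k+1-\mu_n,\dots,k+1-\mu_1)$. Define $t:[\ell]\times[\ell+m-1]\to[\ell]$ by $t(r,s)=s$ if $s<r$, $t(r,s)=r$ if $r\leq s\leq m+r-1$, $t(r,s)=s-m+1$ if $s>m+r-1$; for $\nu\in\mathcal{P}^{\ell,\ell+m-1}$, $\tilde\nu:[\ell]\to[\ell]$ is $\tilde\nu(i)=t(i,\nu(i))$. *)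

From mathcomp Require Import all_boot.
Set Implicit Arguments. Unset Strict Implicit. Unset Printing Implicit Defensive.

(* A partition in P^{n,k}: a weakly decreasing function [n] -> [k],
   represented as mu : nat -> nat, with only the values on 1..n relevant. *)
Definition inP (n k : nat) (mu : nat -> nat) : Prop :=
  (forall i, 1 <= i <= n -> 1 <= mu i <= k) /\
  (forall i j, 1 <= i -> i <= j -> j <= n -> mu j <= mu i).

Definition tau (n k : nat) (mu : nat -> nat) : nat -> nat :=
  fun i => k.+1 - mu (n.+1 - i).

(* t : [l] x [l+m-1] -> [l] *)
Definition tfun (m r s : nat) : nat :=
  if s < r then s else if s <= m + r - 1 then r else s - m + 1.

Definition tilde (m : nat) (nu : nat -> nat) : nat -> nat :=
  fun i => tfun m i (nu i).

(* On [1, l] the map [tilde m (tau l (l + m - 1) mu)] is the conjugate of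
   [tilde m mu] by the reversal i |-> l + 1 - i, because [t] commutes with
   reversing both of its arguments.  Reversal turns the descent condition (1)
   of a self-map of [1, l] into the ascent condition (2) of its conjugate. *)

From mathcomp Require Import all_boot.
From mathcomp Require Import zify.

Definition revn (l i : nat) : nat := l.+1 - i.

Definition descent_closed (l : nat) (f : nat -> nat) : Prop :=
  forall i, 1 <= i <= l -> f i < i -> f (f i) < i.

Definition ascent_closed (l : nat) (g : nat -> nat) : Prop :=
  forall i, 1 <= i <= l -> i < g i -> i < g (g i).

Lemma revn_range l i : 1 <= i <= l -> 1 <= revn l i <= l.
Proof. by rewrite /revn; lia. Qed.

Lemma revnK l i : i <= l -> revn l (revn l i) = i.
Proof. by rewrite /revn; lia. Qed.

Section ReversalConjugate.

Variables (l : nat) (f g : nat -> nat).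
Hypothesis f_range : forall i, 1 <= i <= l -> 1 <= f i <= l.
Hypothesis g_conj : forall i, 1 <= i <= l -> g i = revn l (f (revn l i)).

Lemma ascent_at_revn i : 1 <= i <= l ->
  (i < g i -> i < g (g i)) <-> (f (revn l i) < revn l i ->
                                f (f (revn l i)) < revn l i).
Proof.
move=> hi; set j := revn l i.
have hj : 1 <= j <= l by apply: revn_range.
have hfj := f_range _ hj; have hffj := f_range _ hfj.
have eg : g i = revn l (f j) by apply: g_conj.
have egg : g (g i) = revn l (f (f j)).
  by rewrite eg g_conj ?revnK //; [case/andP: hfj | apply: revn_range].
rewrite egg eg /j /revn in hj hfj hffj *; split => H h; lia.
Qed.

Lemma descent_closed_revn_conj : descent_closed l f <-> ascent_closed l g.
Proof.
split=> H i hi.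
- by apply/(ascent_at_revn _ hi)/H/revn_range.
- have hri := revn_range _ _ hi.
  by move: (ascent_at_revn _ hri); rewrite revnK; [case; auto | case/andP: hi].
Qed.

End ReversalConjugate.

Lemma tfun_range l m r s : 0 < m -> 1 <= r <= l -> 1 <= s <= l + m - 1 ->
  1 <= tfun m r s <= l.
Proof. by move=> hm hr hs; rewrite /tfun; case: ifP => ?; [|case: ifP]; lia. Qed.

Lemma tfun_revn l m r s : 0 < m -> 1 <= r <= l -> 1 <= s <= l + m - 1 ->
  tfun m r (revn (l + m - 1) s) = revn l (tfun m (revn l r) s).
Proof.
move=> hm hr hs; rewrite /tfun /revn.
by do 4 (try case: ifP => ?); lia.
Qed.

Lemma tilde_tau l m mu i : 0 < m -> inP l (l + m - 1) mu -> 1 <= i <= l ->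
  tilde m (tau l (l + m - 1) mu) i = revn l (tilde m mu (revn l i)).
Proof.
move=> hm [mu_range _] hi.
by rewrite /tilde /tau -/(revn l i) tfun_revn // mu_range // revn_range.
Qed.

Theorem claim3p7 (l m : nat) (mu : nat -> nat) :
  0 < l -> 0 < m -> inP l (l + m - 1) mu ->
  (forall i, 1 <= i <= l ->
     tilde m mu i < i -> tilde m mu (tilde m mu i) < i) <->
  (forall i, 1 <= i <= l ->
     i < tilde m (tau l (l + m - 1) mu) i ->
     i < tilde m (tau l (l + m - 1) mu) (tilde m (tau l (l + m - 1) mu) i)).
Proof.
move=> _ hm hmu; apply: descent_closed_revn_conj.
- by move=> i hi; apply: tfun_range => //; case: hmu => mu_range _; apply: mu_range.
- by move=> i hi; apply: tilde_tau.
Qed.
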